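(* Let $(\mathcal M,\mathrm d_{\mathcal M})$ be a metric space with finite doubling constant $\lambda_{\mathcal M}$, let $m\ge1$, $r>0$ and $p=p_1,\dots,p_m\in\mathcal M^m$. Then the discrete Fréchet ball $\{q\in\mathcal M^m:\mathrm d_{dF}(p,q)\le r\}$ can be covered by at most $(4\lambda_{\mathcal M})^m$ sets of the form $\{q\in\mathcal M^m:\mathrm d_{dF}(c,q)\le r/2\}$ with $c\in\mathcal M^m$.
   Context: A curve of complexity $m$ in a metric space $(\mathcal M,\mathrm d_{\mathcal M})$ is a sequence $p=p_1,\dots,p_m$ of points of $\mathcal M$; $\mathcal M^m$ denotes the set of such curves. For $p\in\mathcal M^m$ and $q\in\mathcal M^k$, a traversal of $p$ and $q$ is a sequence of index pairs $(i_1,j_1),\dots,(i_t,j_t)$ with $(i_1,j_1)=(1,1)$, $(i_t,j_t)=(m,k)$, and for every $u<t$: $i_{u+1}-i_u\in\{0,1\}$, $j_{u+1}-j_u\in\{0,1\}$ and $(i_{u+1}-i_u)+(j_{u+1}-j_u)\ge 1$. Its cost is $\max_u \mathrm d_{\mathcal M}(p_{i_u},q_{j_u})$. The discrete Fréchet distance $\mathrm d_{dF}(p,q)$ is the minimum cost over all traversals of $p$ and $q$. The doubling constant $\lambda_{\mathcal M}$ of $\mathcal M$ is the smallest integer such that for every $x\in\mathcal M$ and $r>0$ the ball $\{y:\mathrm d_{\mathcal M}(x,y)\le r\}$ can be covered by at most $\lambda_{\mathcal M}$ balls of radius $r/2$ centered at points of $\mathcal M$. *)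

(* real-valued metric, curves as lists (0-based indices). *)
From Stdlib Require Import Reals List Lia Lra.
Import ListNotations.
Open Scope R_scope.

Definition is_metric {T : Type} (d : T -> T -> R) : Prop :=
  (forall x y, 0 <= d x y) /\
  (forall x y, d x y = 0 <-> x = y) /\
  (forall x y, d x y = d y x) /\
  (forall x y z, d x z <= d x y + d y z).

Definition doubling_bound {T : Type} (d : T -> T -> R) (lam : nat) : Prop :=
  forall (x : T) (r : R), 0 < r ->
    exists cs : list T, (length cs <= lam)%nat /\
      forall y, d x y <= r -> exists c, In c cs /\ d c y <= r / 2.

Definition is_doubling_constant {T : Type} (d : T -> T -> R) (lam : nat) : Prop :=
  doubling_bound d lam /\ forall k, doubling_bound d k -> (lam <= k)%nat.

Definition is_traversal {T : Type} (p q : list T) (t : list (nat * nat)) : Prop :=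
  t <> [] /\
  nth 0 t (0%nat, 0%nat) = (0%nat, 0%nat) /\
  nth (length t - 1) t (0%nat, 0%nat) = (length p - 1, length q - 1)%nat /\
  forall u, (S u < length t)%nat ->
    let (i, j) := nth u t (0%nat, 0%nat) in
    let (i', j') := nth (S u) t (0%nat, 0%nat) in
    (i' = i \/ i' = S i) /\ (j' = j \/ j' = S j) /\ (i' + j' >= i + j + 1)%nat.

(* distance between p_i and q_j (indices of a traversal are always in range;
   the out-of-range value 0 is never used) *)
Definition pt_dist {T : Type} (d : T -> T -> R) (p q : list T) (ij : nat * nat) : R :=
  match nth_error p (fst ij), nth_error q (snd ij) with
  | Some a, Some b => d a b
  | _, _ => 0
  end.

(* cost = max over the pairs of t (distances are >= 0, t nonempty) *)
Definition traversal_cost {T : Type} (d : T -> T -> R)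
  (p q : list T) (t : list (nat * nat)) : R :=
  fold_right Rmax 0 (map (pt_dist d p q) t).

Definition is_dF {T : Type} (d : T -> T -> R) (p q : list T) (x : R) : Prop :=
  (exists t, is_traversal p q t /\ traversal_cost d p q t = x) /\
  (forall t, is_traversal p q t -> x <= traversal_cost d p q t).

Definition dF_le {T : Type} (d : T -> T -> R) (p q : list T) (r : R) : Prop :=
  exists x, is_dF d p q x /\ x <= r.

(* A traversal of cost <= r couples every vertex q_j with some vertex p_(i j),
   d(p_(i j), q_j) <= r, and j |-> i j is nondecreasing.  Such a map is
   recorded by a word of at most 2m bits (a "staircase code": bit true emits
   the current index of p, bit false advances it), so there are at most 4^m
   possible couplings.  For a fixed coupling, choose for q_j one of the
   <= lam centers of a doubling cover of the ball B(p_(i j), r); there are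
   <= lam^m such choices.  The curve c of the chosen centers follows q
   vertex by vertex within r/2, hence d_dF(c, q) <= r/2 via the diagonal
   traversal. *)

From Stdlib Require Import Reals List Lia Lra Classical.
Import ListNotations.
Open Scope R_scope.

Fixpoint words {A : Type} (xs : list A) (n : nat) : list (list A) :=
  match n with
  | O => [[]]
  | S n' => flat_map (fun x => map (cons x) (words xs n')) xs
  end.

Lemma length_flat_map_const {A B : Type} (f : A -> list B) (k : nat) (l : list A) :
  (forall x, length (f x) = k) -> length (flat_map f l) = (length l * k)%nat.
Proof.
  intro Hf; induction l as [|a l IH]; simpl; auto.
  rewrite length_app, Hf, IH; lia.
Qed.

Lemma length_words {A : Type} (xs : list A) (n : nat) :
  length (words xs n) = (length xs ^ n)%nat.
Proof.
  induction n as [|n IH]; simpl; auto.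
  rewrite (length_flat_map_const _ (length xs ^ n)%nat); auto.
  intro; rewrite length_map; auto.
Qed.

Lemma in_words {A : Type} (xs : list A) (w : list A) :
  (forall x, In x w -> In x xs) -> In w (words xs (length w)).
Proof.
  induction w as [|a w IH]; intro Hw; simpl; auto.
  apply in_flat_map; exists a; split; [apply Hw; left; auto|].
  apply in_map, IH; intros; apply Hw; right; auto.
Qed.

Lemma finite_choice {A : Type} (a0 : A) (P : nat -> A -> Prop) (n : nat) :
  (forall j, (j < n)%nat -> exists a, P j a) ->
  exists xs, length xs = n /\ forall j, (j < n)%nat -> P j (nth j xs a0).
Proof.
  induction n as [|n IH]; intro H.
  - exists []; split; auto; intros; lia.
  - destruct IH as [xs [Hlen Hxs]]; [intros; apply H; lia|].
    destruct (H n) as [a Ha]; [lia|].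
    exists (xs ++ [a]); split; [rewrite length_app; simpl; lia|].
    intros j Hj; destruct (Nat.eq_dec j n) as [->|Hne].
    + rewrite app_nth2, Hlen, Nat.sub_diag by lia; auto.
    + rewrite app_nth1 by lia; apply Hxs; lia.
Qed.

Lemma least_in_list (V : list R) (P : R -> Prop) :
  (exists v, In v V /\ P v) ->
  exists v0, P v0 /\ forall v, In v V -> P v -> v0 <= v.
Proof.
  induction V as [|a V IH]; intros [v [Hv HP]]; [destruct Hv|].
  destruct (classic (exists v, In v V /\ P v)) as [Hex|Hno].
  - destruct (IH Hex) as [v0 [Hv0 Hleast]].
    destruct (classic (P a /\ a < v0)) as [[Pa Hlt]|Hnot].
    + exists a; split; auto.
      intros w [<-|Hw] Pw; [lra|specialize (Hleast w Hw Pw); lra].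
    + exists v0; split; auto.
      intros w [<-|Hw] Pw; auto.
      destruct (Rlt_le_dec a v0); auto; exfalso; auto.
  - destruct Hv as [<-|Hv]; [|exfalso; eauto].
    exists a; split; auto.
    intros w [<-|Hw] Pw; [lra|exfalso; eauto].
Qed.

Lemma pt_dist_nth {T : Type} (d : T -> T -> R) (p q : list T) (x0 : T) (i j : nat) :
  (i < length p)%nat -> (j < length q)%nat ->
  pt_dist d p q (i, j) = d (nth i p x0) (nth j q x0).
Proof.
  intros Hi Hj; unfold pt_dist; simpl.
  rewrite (nth_error_nth' p x0 Hi), (nth_error_nth' q x0 Hj); reflexivity.
Qed.

Lemma pt_dist_values {T : Type} (d : T -> T -> R) (p q : list T) (ij : nat * nat) :
  pt_dist d p q ij = 0 \/
  In (pt_dist d p q ij)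
     (map (pt_dist d p q) (list_prod (seq 0 (length p)) (seq 0 (length q)))).
Proof.
  destruct ij as [i j].
  destruct (Nat.lt_ge_cases i (length p)) as [Hi|Hi];
    [|left; unfold pt_dist; simpl; rewrite (proj2 (nth_error_None p i) Hi); auto].
  destruct (Nat.lt_ge_cases j (length q)) as [Hj|Hj];
    [|left; unfold pt_dist; simpl; rewrite (proj2 (nth_error_None q j) Hj);
      destruct (nth_error p i); auto].
  right; apply in_map, in_prod; apply in_seq; lia.
Qed.

Lemma cost_in_values {T : Type} (d : T -> T -> R) (p q : list T) (t : list (nat * nat)) :
  In (traversal_cost d p q t)
     (0 :: map (pt_dist d p q) (list_prod (seq 0 (length p)) (seq 0 (length q)))).
Proof.
  unfold traversal_cost; induction t as [|ij t IH]; [left; auto|].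
  simpl map; simpl fold_right.
  apply Rmax_case; [|exact IH].
  destruct (pt_dist_values d p q ij) as [H|H]; [left; auto|right; auto].
Qed.

(* The minimum in the definition of d_dF exists, so a traversal of cost
   at most s witnesses d_dF(p, q) <= s. *)
Lemma dF_le_of_traversal {T : Type} (d : T -> T -> R) (p q : list T)
    (t : list (nat * nat)) (s : R) :
  is_traversal p q t -> traversal_cost d p q t <= s -> dF_le d p q s.
Proof.
  intros Ht Hcost.
  set (P := fun v => exists t', is_traversal p q t' /\ traversal_cost d p q t' = v).
  destruct (least_in_list
    (0 :: map (pt_dist d p q) (list_prod (seq 0 (length p)) (seq 0 (length q)))) P)
    as [v0 [Hv0 Hleast]].
  { exists (traversal_cost d p q t); split; [apply cost_in_values|exists t; auto]. }
  exists v0; split.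
  - split; [exact Hv0|].
    intros t' Ht'; apply Hleast; [apply cost_in_values|exists t'; auto].
  - assert (v0 <= traversal_cost d p q t)
      by (apply Hleast; [apply cost_in_values|exists t; auto]).
    lra.
Qed.

Lemma pt_dist_le_cost {T : Type} (d : T -> T -> R) (p q : list T)
    (t : list (nat * nat)) (ij : nat * nat) :
  In ij t -> pt_dist d p q ij <= traversal_cost d p q t.
Proof.
  unfold traversal_cost; induction t as [|x t IH]; intros Hin; [destruct Hin|].
  destruct Hin as [<-|Hin]; simpl; [apply Rmax_l|].
  eapply Rle_trans; [apply IH; auto|apply Rmax_r].
Qed.

Lemma cost_le {T : Type} (d : T -> T -> R) (p q : list T) (t : list (nat * nat)) (s : R) :
  0 <= s -> (forall ij, In ij t -> pt_dist d p q ij <= s) -> traversal_cost d p q t <= s.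
Proof.
  unfold traversal_cost; intros Hs; induction t as [|ij t IH]; intros H; simpl; auto.
  apply Rmax_lub; [apply H; left; auto|apply IH; intros; apply H; right; auto].
Qed.

Lemma dF_le_diagonal {T : Type} (d : T -> T -> R) (c q : list T) (s : R) :
  (1 <= length c)%nat -> length c = length q -> 0 <= s ->
  (forall j, (j < length c)%nat -> pt_dist d c q (j, j) <= s) -> dF_le d c q s.
Proof.
  intros Hc Hlen Hs H.
  set (t := map (fun j => (j, j)) (seq 0 (length c))).
  assert (Hlt : length t = length c) by (unfold t; rewrite length_map, length_seq; auto).
  assert (Hnth : forall u, (u < length c)%nat -> nth u t (0%nat, 0%nat) = (u, u)).
  { intros u Hu; unfold t.
    change (0%nat, 0%nat) with ((fun j : nat => (j, j)) 0%nat).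
    rewrite map_nth, seq_nth; auto. }
  apply (dF_le_of_traversal d c q t s).
  - split; [|split; [|split]].
    + intro E; rewrite E in Hlt; simpl in Hlt; lia.
    + apply Hnth; lia.
    + rewrite Hlt, Hnth, <- Hlen by lia; reflexivity.
    + intros u Hu; rewrite Hlt in Hu; rewrite (Hnth u), (Hnth (S u)) by lia; lia.
  - apply cost_le; auto.
    intros ij Hij; unfold t in Hij; apply in_map_iff in Hij.
    destruct Hij as [j [<- Hj]]; apply in_seq in Hj; apply H; lia.
Qed.

Fixpoint decode (a : nat) (bs : list bool) : list nat :=
  match bs with
  | [] => []
  | true :: bs' => a :: decode a bs'
  | false :: bs' => decode (S a) bs'
  end.

Lemma decode_pad (bs : list bool) (a n : nat) :
  decode a (bs ++ repeat false n) = decode a bs.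
Proof.
  revert a; induction bs as [|b bs IH]; intro a; simpl.
  - revert a; induction n; simpl; auto.
  - destruct b; rewrite IH; auto.
Qed.

Definition step_ok (x y : nat * nat) : Prop :=
  let (i, j) := x in
  let (i', j') := y in
  (i' = i \/ i' = S i) /\ (j' = j \/ j' = S j) /\ (i' + j' >= i + j + 1)%nat.

Fixpoint chain (x : nat * nat) (rest : list (nat * nat)) : Prop :=
  match rest with
  | [] => True
  | y :: rest' => step_ok x y /\ chain y rest'
  end.

Lemma chain_of_steps (rest : list (nat * nat)) (x : nat * nat) :
  (forall u, (S u < length (x :: rest))%nat ->
     step_ok (nth u (x :: rest) (0%nat, 0%nat)) (nth (S u) (x :: rest) (0%nat, 0%nat))) ->
  chain x rest.
Proof.
  revert x; induction rest as [|y rest IH]; intros x H; simpl; auto.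
  split; [apply (H 0%nat); simpl; lia|].
  apply IH; intros u Hu; apply (H (S u)); simpl in *; lia.
Qed.

Lemma nth_length_last {A : Type} (rest : list A) (x dflt : A) :
  nth (length rest) (x :: rest) dflt = last (x :: rest) dflt.
Proof.
  revert x; induction rest as [|y rest IH]; intro x; [reflexivity|].
  change (last (x :: y :: rest) dflt) with (last (y :: rest) dflt).
  rewrite <- IH; reflexivity.
Qed.

Lemma chain_code (rest : list (nat * nat)) (a b a' b' : nat) :
  chain (a, b) rest -> last ((a, b) :: rest) (0%nat, 0%nat) = (a', b') ->
  exists bs, (a <= a')%nat /\ (a + b + length bs = a' + b' + 1)%nat /\
    (b + length (decode a bs) = S b')%nat /\
    (forall v, In v (decode a bs) -> (v <= a')%nat) /\
    (forall idx, (idx < length (decode a bs))%nat ->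
       In (nth idx (decode a bs) 0%nat, (b + idx)%nat) ((a, b) :: rest)).
Proof.
  revert a b; induction rest as [|[a2 b2] rest IH]; intros a b Hc Hl.
  - simpl in Hl; inversion Hl; subst.
    exists [true]; simpl; split; [lia|]; split; [lia|]; split; [lia|]; split.
    + intros v [<-|[]]; lia.
    + intros [|idx] Hi; [left; f_equal; lia|lia].
  - destruct Hc as [Hs Hc]; simpl in Hs.
    destruct (IH a2 b2 Hc Hl) as [bs [Hle [Hbits [Hcols [Hrows Hvisit]]]]].
    (* a diagonal or vertical step emits row a for column b; a horizontal
       step only advances the row *)
    destruct Hs as [[Ha|Ha] [[Hb|Hb] Hsum]]; subst; try lia.
    + exists (true :: bs); simpl; split; [lia|]; split; [lia|]; split; [lia|]; split.
      * intros v [<-|Hv]; [lia|auto].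
      * intros [|idx] Hi; simpl; [left; f_equal; lia|].
        right; replace (b + S idx)%nat with (S b + idx)%nat by lia.
        apply Hvisit; simpl in Hi; lia.
    + exists (false :: bs); simpl; split; [lia|]; split; [lia|]; split; auto.
      split; [exact Hrows|intros idx Hi; right; apply Hvisit; auto].
    + exists (true :: false :: bs); simpl; split; [lia|]; split; [lia|]; split; [lia|]; split.
      * intros v [<-|Hv]; [lia|auto].
      * intros [|idx] Hi; simpl; [left; f_equal; lia|].
        right; replace (b + S idx)%nat with (S b + idx)%nat by lia.
        apply Hvisit; simpl in Hi; lia.
Qed.

Lemma traversal_coupling {T : Type} (p q : list T) (t : list (nat * nat)) :
  (1 <= length p)%nat -> is_traversal p q t ->
  exists bs, (length bs <= length p + length q)%nat /\
    forall j, (j < length q)%nat ->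
      (nth j (decode 0 bs) 0 < length p)%nat /\ In (nth j (decode 0 bs) 0%nat, j) t.
Proof.
  intros Hp [Hne [Hfirst [Hlast Hsteps]]].
  destruct t as [|x rest]; [congruence|]; simpl in Hfirst; subst x.
  assert (Hchain : chain (0%nat, 0%nat) rest) by (apply chain_of_steps; exact Hsteps).
  assert (Hend : last ((0%nat, 0%nat) :: rest) (0%nat, 0%nat)
                 = (length p - 1, length q - 1)%nat).
  { rewrite <- nth_length_last, <- Hlast; f_equal; simpl; lia. }
  destruct (chain_code rest 0 0 _ _ Hchain Hend) as [bs [_ [Hbits [Hcols [Hrows Hvisit]]]]].
  exists bs; split; [lia|].
  intros j Hj; split.
  - assert (nth j (decode 0 bs) 0 <= length p - 1)%nat by (apply Hrows, nth_In; lia).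
    lia.
  - apply (Hvisit j); lia.
Qed.

Section Covering.
Variables (T : Type) (d : T -> T -> R) (lam m : nat) (r : R) (x0 : T).
Variables (p : list T) (covers : list (list T)).
Hypothesis hm : (1 <= m)%nat.
Hypothesis hr : 0 < r.
Hypothesis hp : length p = m.
Hypothesis covers_length : forall i, (i < m)%nat -> (length (nth i covers []) <= lam)%nat.
Hypothesis covers_spec : forall i y, (i < m)%nat -> d (nth i p x0) y <= r ->
  exists c, In c (nth i covers []) /\ d c y <= r / 2.

Definition candidate (bs : list bool) (ks : list nat) : list T :=
  map (fun j => nth (nth j ks 0%nat) (nth (nth j (decode 0 bs) 0%nat) covers []) x0)
      (seq 0 m).

Definition candidates : list (list T) :=
  flat_map (fun bs => map (candidate bs) (words (seq 0 lam) m)) (words [false; true] (2 * m)).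

Lemma length_candidate (bs : list bool) (ks : list nat) : length (candidate bs ks) = m.
Proof. unfold candidate; rewrite length_map, length_seq; reflexivity. Qed.

Lemma nth_candidate (bs : list bool) (ks : list nat) (j : nat) : (j < m)%nat ->
  nth j (candidate bs ks) x0
  = nth (nth j ks 0%nat) (nth (nth j (decode 0 bs) 0%nat) covers []) x0.
Proof.
  intro Hj; unfold candidate.
  set (vertex := fun j => nth (nth j ks 0%nat) (nth (nth j (decode 0 bs) 0%nat) covers []) x0).
  rewrite (nth_indep _ x0 (vertex 0%nat)) by (rewrite length_map, length_seq; lia).
  rewrite map_nth, seq_nth by lia; reflexivity.
Qed.

Lemma in_candidates_length (c : list T) : In c candidates -> length c = m.
Proof.
  unfold candidates; intro Hc; apply in_flat_map in Hc.
  destruct Hc as [bs [_ Hc]]; apply in_map_iff in Hc.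
  destruct Hc as [ks [<- _]]; apply length_candidate.
Qed.

Lemma length_candidates : length candidates = ((4 * lam) ^ m)%nat.
Proof.
  unfold candidates; rewrite (length_flat_map_const _ (lam ^ m)%nat).
  - rewrite length_words, Nat.pow_mul_r, <- Nat.pow_mul_l; reflexivity.
  - intro bs; rewrite length_map, length_words, length_seq; reflexivity.
Qed.

Definition pad_code (bs : list bool) : list bool := bs ++ repeat false (2 * m - length bs).

Lemma candidate_in_candidates (bs : list bool) (ks : list nat) :
  (length bs <= 2 * m)%nat -> length ks = m ->
  (forall j, (j < m)%nat -> (nth j ks 0 < lam)%nat) ->
  In (candidate (pad_code bs) ks) candidates.
Proof.
  intros Hbs Hks Hlam; apply in_flat_map; exists (pad_code bs); split.
  - replace (2 * m)%nat with (length (pad_code bs))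
      by (unfold pad_code; rewrite length_app, repeat_length; lia).
    apply in_words; intros [|] _; simpl; auto.
  - apply in_map; rewrite <- Hks; apply in_words.
    intros k Hk; destruct (In_nth _ _ 0%nat Hk) as [j [Hj <-]].
    apply in_seq; specialize (Hlam j ltac:(lia)); lia.
Qed.

Lemma candidates_cover (q : list T) :
  length q = m -> dF_le d p q r -> exists c, In c candidates /\ dF_le d c q (r / 2).
Proof.
  intros Hq [x [[[t [Ht Hcost]] _] Hxr]].
  destruct (traversal_coupling p q t ltac:(lia) Ht) as [bs0 [Hbits Hcouple]].
  set (rows := decode 0 bs0) in *.
  assert (Hcenter : forall j, (j < m)%nat -> exists k, (k < lam)%nat /\
      d (nth k (nth (nth j rows 0%nat) covers []) x0) (nth j q x0) <= r / 2).
  { intros j Hj.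
    destruct (Hcouple j ltac:(lia)) as [Hrow Hin].
    assert (Hclose : d (nth (nth j rows 0%nat) p x0) (nth j q x0) <= r).
    { rewrite <- (pt_dist_nth d p q x0) by lia.
      eapply Rle_trans; [apply pt_dist_le_cost, Hin|lra]. }
    destruct (covers_spec (nth j rows 0%nat) _ ltac:(lia) Hclose) as [c [Hc Hcy]].
    destruct (In_nth _ _ x0 Hc) as [k [Hk <-]].
    exists k; split; auto.
    specialize (covers_length (nth j rows 0%nat) ltac:(lia)); lia. }
  destruct (finite_choice 0%nat _ m Hcenter) as [ks [Hks Hks_spec]].
  exists (candidate (pad_code bs0) ks); split.
  - apply candidate_in_candidates; auto.
    + rewrite hp, Hq in Hbits; lia.
    + intros j Hj; apply Hks_spec, Hj.
  - apply dF_le_diagonal; rewrite ?length_candidate; [lia|lia|lra|].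
    intros j Hj; rewrite (pt_dist_nth d _ _ x0) by (rewrite ?length_candidate; lia).
    rewrite nth_candidate by lia; unfold pad_code; rewrite decode_pad; apply Hks_spec, Hj.
Qed.

End Covering.

Theorem mainTheorem13 (T : Type) (d : T -> T -> R) (lam : nat)
  (hd : is_metric d) (hlam : is_doubling_constant d lam)
  (m : nat) (hm : (1 <= m)%nat) (r : R) (hr : 0 < r)
  (p : list T) (hp : length p = m) :
  exists cs : list (list T),
    (length cs <= (4 * lam) ^ m)%nat /\
    (forall c, In c cs -> length c = m) /\
    forall q : list T, length q = m ->
      dF_le d p q r ->
      exists c, In c cs /\ dF_le d c q (r / 2).
Proof.
  destruct p as [|x0 rest]; [simpl in hp; lia|].
  destruct (finite_choice [] (fun i cs => (length cs <= lam)%nat /\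
      forall y, d (nth i (x0 :: rest) x0) y <= r ->
        exists c, In c cs /\ d c y <= r / 2) m)
    as [covers [_ Hcovers]].
  { intros i _; apply (proj1 hlam _ _ hr). }
  exists (candidates T lam m x0 covers); split; [|split].
  - rewrite length_candidates; lia.
  - apply in_candidates_length.
  - apply (candidates_cover T d lam m r x0 (x0 :: rest) covers hm hr hp).
    + intros i Hi; apply (Hcovers i Hi).
    + intros i y Hi; apply (Hcovers i Hi).
Qed.
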